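(* Let $s$ be a positive integer and let $f_1,f_2,f_3\colon[s]^2\to\mathbb{Z}$ be strongly monotone functions. Define $f\colon[s]^3\to\mathbb{Z}^3$ by $f(x,y,z)=\bigl(f_1(x,y),f_2(x,z),f_3(y,z)\bigr)$. Then $f$ takes at least $s^2/6$ distinct values on $[s]^3$.
   Context: $[s]=\{1,\dots,s\}$. A function $g$ of two variables is strongly monotone if $g(x,y)\leq g(x',y)$, $g(x,y)\leq g(x,y')$ and $g(x,y)<g(x',y')$ whenever $x<x'$ and $y<y'$. *)

From mathcomp Require Import all_boot all_order all_algebra.
Set Implicit Arguments. Unset Strict Implicit. Unset Printing Implicit Defensive.

(* [s] = {1,...,s} is represented by 'I_s = {0,...,s-1} (order-preserving shift
   by one; strong monotonicity only depends on the order). *)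

Definition strongly_monotone (s : nat) (g : 'I_s -> 'I_s -> int) : Prop :=
  forall x x' y y' : 'I_s,
    ((x < x')%N -> (g x y <= g x' y)%R) /\
    ((y < y')%N -> (g x y <= g x y')%R) /\
    ((x < x')%N -> (y < y')%N -> (g x y < g x' y')%R).

Definition fmap3 (s : nat) (f1 f2 f3 : 'I_s -> 'I_s -> int)
  (x y z : 'I_s) : int * int * int := (f1 x y, f2 x z, f3 y z).

Definition num_values (s : nat) (f1 f2 f3 : 'I_s -> 'I_s -> int) : nat :=
  size (undup (flatten [seq [seq fmap3 f1 f2 f3 x y z
                       | y <- enum 'I_s, z <- enum 'I_s] | x <- enum 'I_s])).

From mathcomp Require Import all_boot all_order all_algebra zify.
Set Implicit Arguments. Unset Strict Implicit. Unset Printing Implicit Defensive.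

(* Fix a value v and its fiber F.  Since f1(x, y) is constant on F, the pairs
   (x, y) occurring in F form an antichain for the product order, so x - y
   takes distinct values on them: at most 2s pairs.  Hence at most 2s points of
   F have maximal z above their (x, y).  Every other point (x, y, z) of F has
   some (x, y, w) in F with z < w; by the same argument applied to f2 there are
   at most 2s pairs (x, z), and (x, z) determines y, since y < y' would give
   f3(y, z) = f3(y', w') with z < w'.  So every fiber has at most 4s points,
   and s^3 <= 4s * #values. *)

Lemma size_le_undup_mul (T : eqType) (l : seq T) (B : nat) :
  (forall v, count_mem v l <= B) -> size l <= size (undup l) * B.
Proof.
move=> countB; rewrite -(perm_size (perm_count_undup l)) size_flatten /shape.
rewrite -map_comp; elim: (undup l) => //= v u IHu.
by rewrite mulSn size_nseq leq_add.
Qed.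

Section StronglyMonotone.

Variables (s : nat) (g : 'I_s -> 'I_s -> int).
Hypothesis smg : strongly_monotone g.

Lemma strongly_monotone_level_anti (a b a' b' : 'I_s) :
  g a b = g a' b' -> a < a' -> b' <= b.
Proof.
move=> gE lt_aa'; rewrite leqNgt; apply/negP => lt_bb'.
by have := (smg a a' b b').2.2 lt_aa' lt_bb'; rewrite gE Order.POrderTheory.ltxx.
Qed.

(* On a level set of [g] the pairs form an antichain, so [a - b] separates them. *)
Lemma strongly_monotone_level_inj (a b a' b' : 'I_s) :
  g a b = g a' b' -> a + (s - b) = a' + (s - b') -> (a, b) = (a', b').
Proof.
move=> gE diagE; have := ltn_ord b; have := ltn_ord b'.
case: (ltngtP a a') => [lt_aa'|lt_a'a|eq_aa'] ltb' ltb.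
- by have := strongly_monotone_level_anti gE lt_aa'; lia.
- by have := strongly_monotone_level_anti (esym gE) lt_a'a; lia.
- by congr (_, _); apply: val_inj => //=; lia.
Qed.

Lemma card_level_set (T : finType) (A : {set T}) (k : T -> 'I_s * 'I_s) c :
  {in A &, injective k} -> {in A, forall p, g (k p).1 (k p).2 = c} ->
  #|A| <= 2 * s.
Proof.
move=> k_inj kA.
have diag_lt p : (k p).1 + (s - (k p).2) < 2 * s.
  by have := ltn_ord (k p).1; have := ltn_ord (k p).2; lia.
rewrite -(card_in_imset (f := fun p => Ordinal (diag_lt p))).
  exact: leq_trans (max_card _) (eq_leq (card_ord _)).
move=> p q pA qA /(congr1 val) /= diagE.
apply: k_inj => //; rewrite [k p]surjective_pairing [k q]surjective_pairing.
by apply: strongly_monotone_level_inj; rewrite ?kA.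
Qed.

End StronglyMonotone.

Section FmapFibers.

Variables (s : nat) (f1 f2 f3 : 'I_s -> 'I_s -> int).
Hypotheses (sm1 : strongly_monotone f1) (sm2 : strongly_monotone f2)
  (sm3 : strongly_monotone f3).

Local Notation T := ('I_s * 'I_s * 'I_s)%type.

Definition fmap3_fiber (v : int * int * int) : {set T} :=
  [set p | fmap3 f1 f2 f3 p.1.1 p.1.2 p.2 == v].

Definition fmap3_values : seq (int * int * int) :=
  flatten [seq [seq fmap3 f1 f2 f3 x y z | y <- enum 'I_s, z <- enum 'I_s]
          | x <- enum 'I_s].

Lemma size_fmap3_values : size fmap3_values = s ^ 3.
Proof.
rewrite size_flatten /shape -map_comp sumnE big_map.
under eq_bigr do rewrite /= size_allpairs size_enum_ord.
by rewrite big_const_seq count_predT size_enum_ord iter_addn_0 !expnS expn0 muln1 mulnA.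
Qed.

Lemma count_fmap3_values v : count_mem v fmap3_values = #|fmap3_fiber v|.
Proof.
rewrite -sum1_count big_flatten big_map -sum1_card [RHS]big_mkcond big_enum /=.
under eq_bigr => x _.
  rewrite big_mkcond big_allpairs_dep big_enum /=.
  under eq_bigr => y _ do rewrite big_enum /=.
  over.
rewrite !pair_bigA; apply: eq_bigr => -[[x y] z] _.
by rewrite inE.
Qed.

Lemma fmap3_fiberP v p : p \in fmap3_fiber v ->
  [/\ f1 p.1.1 p.1.2 = v.1.1, f2 p.1.1 p.2 = v.1.2 & f3 p.1.2 p.2 = v.2].
Proof. by rewrite inE => /eqP <-. Qed.

Definition fmap3_fiber_top v : {set T} :=
  [set p in fmap3_fiber v | [forall q in fmap3_fiber v, (q.1 == p.1) ==> (q.2 <= p.2)]].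

Lemma card_fmap3_fiber_top v : #|fmap3_fiber_top v| <= 2 * s.
Proof.
apply: (@card_level_set _ f1 sm1 _ _ fst v.1.1); last first.
  by move=> p /setIdP[/fmap3_fiberP[]].
move=> p q /setIdP[pF /forall_inP pT] /setIdP[qF /forall_inP qT] pqE.
rewrite [p]surjective_pairing [q]surjective_pairing pqE; congr (_, _).
by apply/val_inj/eqP; rewrite eqn_leq (implyP (pT q qF)) ?(implyP (qT p pF)) ?pqE.
Qed.

Lemma fmap3_fiber_not_top v p : p \in fmap3_fiber v :\: fmap3_fiber_top v ->
  exists2 w : 'I_s, p.2 < w & (p.1, w) \in fmap3_fiber v.
Proof.
case/setDP=> pF; rewrite inE pF /= => /forall_inPn[q qF].
rewrite negb_imply -ltnNge => /andP[/eqP <- lt_pq].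
by exists q.2; rewrite -?surjective_pairing.
Qed.

Lemma card_fmap3_fiber_not_top v : #|fmap3_fiber v :\: fmap3_fiber_top v| <= 2 * s.
Proof.
apply: (@card_level_set _ f2 sm2 _ _ (fun p => (p.1.1, p.2)) v.1.2); last first.
  by move=> p /setDP[/fmap3_fiberP[]].
move=> [[x y] z] [[x' y'] z'] pD qD [/= ex ez]; subst x' z'.
have [/setDP[pF _] /setDP[qF _]] := (pD, qD).
have [w /= lt_zw /fmap3_fiberP[_ _ /= f3w]] := fmap3_fiber_not_top pD.
have [w' /= lt_zw' /fmap3_fiberP[_ _ /= f3w']] := fmap3_fiber_not_top qD.
have [[_ _ /= f3p] [_ _ /= f3q]] := (fmap3_fiberP pF, fmap3_fiberP qF).
case: (ltngtP y y') => [lt_yy'|lt_y'y|/val_inj -> //].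
- have := strongly_monotone_level_anti sm3 (etrans f3p (esym f3w')) lt_yy'.
  by rewrite leqNgt lt_zw'.
- have := strongly_monotone_level_anti sm3 (etrans f3q (esym f3w)) lt_y'y.
  by rewrite leqNgt lt_zw.
Qed.

Lemma card_fmap3_fiber v : #|fmap3_fiber v| <= 4 * s.
Proof.
rewrite -(cardsID (fmap3_fiber_top v)) -[4]/(2 + 2) mulnDl leq_add //.
  exact: leq_trans (subset_leq_card (subsetIr _ _)) (card_fmap3_fiber_top v).
exact: card_fmap3_fiber_not_top.
Qed.

Lemma sqr_le_num_values : 0 < s -> s ^ 2 <= 4 * num_values f1 f2 f3.
Proof.
move=> s_gt0; rewrite -(leq_pmul2r s_gt0) -expnSr -size_fmap3_values -mulnA.
rewrite mulnCA; apply: size_le_undup_mul => v.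
by rewrite count_fmap3_values card_fmap3_fiber.
Qed.

End FmapFibers.

Theorem lemma24 (s : nat) (f1 f2 f3 : 'I_s -> 'I_s -> int) :
  (0 < s)%N ->
  strongly_monotone f1 -> strongly_monotone f2 -> strongly_monotone f3 ->
  (s ^ 2 <= 6 * num_values f1 f2 f3)%N.
Proof.
move=> s_gt0 sm1 sm2 sm3.
by rewrite (leq_trans (sqr_le_num_values sm1 sm2 sm3 s_gt0)) // leq_mul2r orbT.
Qed.
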